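(* Let $U$ be a finite nonempty set, let $(T,I,N)$ be a residual triplet, and let $\widetilde{R}$ be a $T$-preorder relation on $U$. Let $u,v\in U$ and $\lambda_1,\lambda_2\in[0,1]$. Then the fuzzy granules $\widetilde{R}^+_{\lambda_1}(u)$ and $\widetilde{R}^-_{\lambda_2}(v)$ are $T$-disjoint if and only if $$T(\lambda_1,\lambda_2)\le N(\widetilde{R}(v,u)).$$
   Context: A residual triplet $(T,I,N)$ consists of a left-continuous $t$-norm $T$, its residual implicator $I(x,y)=\sup\{\beta\in[0,1]: T(x,\beta)\le y\}$, and the induced negator $N(x)=I(x,0)$. A fuzzy relation $\widetilde{R}:U\times U\to[0,1]$ is a $T$-preorder if it is reflexive ($\widetilde{R}(u,u)=1$) and $T$-transitive ($T(\widetilde{R}(u,v),\widetilde{R}(v,w))\le \widetilde{R}(u,w)$ for all $u,v,w$). For $u\in U$ and $\lambda\in[0,1]$, the granule $\widetilde{R}^+_\lambda(u)$ is the fuzzy set on $U$ with membership $w\mapsto T(\widetilde{R}(w,u),\lambda)$, and $\widetilde{R}^-_\lambda(u)$ is the fuzzy set with membership $w\mapsto T(\widetilde{R}(u,w),\lambda)$. Two fuzzy sets $A,B$ on $U$ are $T$-disjoint if $T(A(w),B(w))=0$ for every $w\in U$. *)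

From Stdlib Require Import Reals Lra List.
Open Scope R_scope.

Definition unit_iv (x : R) : Prop := 0 <= x <= 1.

Definition is_tnorm (T : R -> R -> R) : Prop :=
  (forall x y, unit_iv x -> unit_iv y -> unit_iv (T x y)) /\
  (forall x y, unit_iv x -> unit_iv y -> T x y = T y x) /\
  (forall x y z, unit_iv x -> unit_iv y -> unit_iv z ->
     T x (T y z) = T (T x y) z) /\
  (forall x y z, unit_iv x -> unit_iv y -> unit_iv z ->
     x <= y -> T x z <= T y z) /\
  (forall x, unit_iv x -> T x 1 = x).

(* Left-continuity (in the first argument; by commutativity, in both). *)
Definition left_continuous_tnorm (T : R -> R -> R) : Prop :=
  forall x y, 0 < x <= 1 -> unit_iv y ->
    forall eps, 0 < eps -> exists delta, 0 < delta /\
      forall z, unit_iv z -> x - delta < z <= x ->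
        Rabs (T z y - T x y) < eps.

Definition is_residual_implicator (T I : R -> R -> R) : Prop :=
  forall x y, unit_iv x -> unit_iv y ->
    is_lub (fun b => unit_iv b /\ T x b <= y) (I x y).

Definition residual_triplet (T I : R -> R -> R) (N : R -> R) : Prop :=
  is_tnorm T /\ left_continuous_tnorm T /\ is_residual_implicator T I /\
  (forall x, N x = I x 0).

Definition fuzzy_relation {U : Type} (Rel : U -> U -> R) : Prop :=
  forall u v, unit_iv (Rel u v).

Definition T_preorder {U : Type} (T : R -> R -> R) (Rel : U -> U -> R) : Prop :=
  fuzzy_relation Rel /\ (forall u, Rel u u = 1) /\
  (forall u v w, T (Rel u v) (Rel v w) <= Rel u w).

Definition granule_plus {U : Type} (T : R -> R -> R) (Rel : U -> U -> R)
  (lam : R) (u : U) : U -> R := fun w => T (Rel w u) lam.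

Definition granule_minus {U : Type} (T : R -> R -> R) (Rel : U -> U -> R)
  (lam : R) (u : U) : U -> R := fun w => T (Rel u w) lam.

Definition T_disjoint {U : Type} (T : R -> R -> R) (A B : U -> R) : Prop :=
  forall w, T (A w) (B w) = 0.

Definition finite_nonempty (U : Type) : Prop :=
  inhabited U /\ exists l : list U, forall x, In x l.

(* Both granules meet at w with degree T (T (Rel v w) (Rel w u)) (T lam1 lam2),
   by associativity and commutativity of T.  By T-transitivity and reflexivity
   the largest of these degrees is attained at w = v, where it equals
   T (Rel v u) (T lam1 lam2); so T-disjointness amounts to this value being 0.
   Left-continuity makes the residual implicator an exact adjoint of T, i.e.
   T x b <= y iff b <= I x y, and with y = 0 this is the claimed inequality. *)
From Stdlib Require Import Reals Lra Classical.
Open Scope R_scope.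

Lemma unit_iv0 : unit_iv 0.
Proof. unfold unit_iv; lra. Qed.

Lemma unit_iv1 : unit_iv 1.
Proof. unfold unit_iv; lra. Qed.

#[local] Hint Resolve unit_iv0 unit_iv1 : core.

Lemma lub_approx (E : R -> Prop) (c z : R) :
  is_lub E c -> z < c -> exists b, E b /\ z < b.
Proof.
  intros [_ Hleast] Hzc. apply NNPP. intro Hnone.
  assert (c <= z).
  { apply Hleast. intros b Eb. apply Rnot_lt_le. intro Hzb.
    apply Hnone. exists b. auto. }
  lra.
Qed.

Section TNorm.

Variable T : R -> R -> R.
Hypothesis HT : is_tnorm T.

Lemma tnorm_unit x y : unit_iv x -> unit_iv y -> unit_iv (T x y).
Proof. apply HT. Qed.

Lemma tnorm_comm x y : unit_iv x -> unit_iv y -> T x y = T y x.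
Proof. apply HT. Qed.

Lemma tnorm_assoc x y z : unit_iv x -> unit_iv y -> unit_iv z ->
  T x (T y z) = T (T x y) z.
Proof. apply HT. Qed.

Lemma tnorm_monol x y z : unit_iv x -> unit_iv y -> unit_iv z ->
  x <= y -> T x z <= T y z.
Proof. apply HT. Qed.

Lemma tnorm_x1 x : unit_iv x -> T x 1 = x.
Proof. apply HT. Qed.

#[local] Hint Resolve tnorm_unit : core.

Lemma tnorm_1x x : unit_iv x -> T 1 x = x.
Proof. intro Hx. rewrite tnorm_comm by auto. now apply tnorm_x1. Qed.

Lemma tnorm_monor x y z : unit_iv x -> unit_iv y -> unit_iv z ->
  y <= z -> T x y <= T x z.
Proof.
  intros Hx Hy Hz Hyz. rewrite (tnorm_comm x y), (tnorm_comm x z) by auto.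
  now apply tnorm_monol.
Qed.

Lemma tnorm_x0 x : unit_iv x -> T x 0 = 0.
Proof.
  intro Hx.
  assert (Hle : T x 0 <= T 1 0) by (apply tnorm_monol; auto; apply Hx).
  rewrite tnorm_1x in Hle by auto.
  destruct (tnorm_unit x 0 Hx unit_iv0). lra.
Qed.

Lemma tnorm_eq0 x y : unit_iv x -> unit_iv y -> T x y = 0 <-> T x y <= 0.
Proof. intros Hx Hy. destruct (tnorm_unit x y Hx Hy). lra. Qed.

Lemma tnorm_ACA a b c d :
  unit_iv a -> unit_iv b -> unit_iv c -> unit_iv d ->
  T (T a c) (T b d) = T (T b a) (T c d).
Proof.
  intros Ha Hb Hc Hd.
  rewrite <- (tnorm_assoc a c), (tnorm_assoc c b d), (tnorm_comm c b),
    <- (tnorm_assoc b c d), (tnorm_assoc a b), (tnorm_comm a b) by auto.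
  reflexivity.
Qed.

Section Residuation.

Variable I : R -> R -> R.
Hypothesis HI : is_residual_implicator T I.

Lemma residual_implicator_unit x y : unit_iv x -> unit_iv y -> unit_iv (I x y).
Proof.
  intros Hx Hy. destruct (HI x y Hx Hy) as [Hub Hleast]. split.
  - apply Hub. split; auto. rewrite tnorm_x0 by auto. apply Hy.
  - apply Hleast. intros b [Hb _]. apply Hb.
Qed.

(* The supremum defining [I x y] is attained only thanks to left-continuity:
   otherwise [T x b] could jump above [y] exactly at [b = I x y]. *)
Lemma tnorm_residual_le x y : left_continuous_tnorm T ->
  unit_iv x -> unit_iv y -> T x (I x y) <= y.
Proof.
  intros Hlc Hx Hy.
  pose proof (residual_implicator_unit x y Hx Hy) as Hc.
  set (c := I x y) in *.
  apply Rnot_lt_le. intro Hgt.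
  destruct (Req_dec c 0) as [Hc0 | Hc0].
  { rewrite Hc0, tnorm_x0 in Hgt by auto. destruct Hy. lra. }
  destruct (Hlc c x ltac:(destruct Hc; lra) Hx (T x c - y) ltac:(lra))
    as [delta [Hdelta Hnear]].
  set (z := Rmax 0 (c - delta / 2)).
  assert (Hzlow : c - delta / 2 <= z) by apply Rmax_r.
  assert (Hzc : z < c) by (unfold z, Rmax; destruct Rle_dec; destruct Hc; lra).
  assert (Hz : unit_iv z).
  { split; [apply Rmax_l | destruct Hc; lra]. }
  destruct (lub_approx _ c z (HI x y Hx Hy) Hzc) as [b [[Hb Hxb] Hzb]].
  assert (Hxz : T x z <= y).
  { apply Rle_trans with (T x b); auto. apply tnorm_monor; auto; lra. }
  specialize (Hnear z Hz ltac:(lra)).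
  rewrite (tnorm_comm z x), (tnorm_comm c x) in Hnear by auto.
  pose proof (Rle_abs (T x c - T x z)). rewrite Rabs_minus_sym in Hnear. lra.
Qed.

Lemma residuation x y b : left_continuous_tnorm T ->
  unit_iv x -> unit_iv y -> unit_iv b -> T x b <= y <-> b <= I x y.
Proof.
  intros Hlc Hx Hy Hb. split.
  - intro Hxb. now apply (HI x y Hx Hy).
  - intro Hbc. apply Rle_trans with (T x (I x y)).
    + apply tnorm_monor; auto. now apply residual_implicator_unit.
    + now apply tnorm_residual_le.
Qed.

End Residuation.

Section Granules.

Variables (U : Type) (Rel : U -> U -> R).
Hypothesis HRel : T_preorder T Rel.

Lemma granule_meet u v lam1 lam2 w : unit_iv lam1 -> unit_iv lam2 ->
  T (granule_plus T Rel lam1 u w) (granule_minus T Rel lam2 v w)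
  = T (T (Rel v w) (Rel w u)) (T lam1 lam2).
Proof. intros. apply tnorm_ACA; auto; apply HRel. Qed.

Lemma T_disjoint_granulesE u v lam1 lam2 : unit_iv lam1 -> unit_iv lam2 ->
  T_disjoint T (granule_plus T Rel lam1 u) (granule_minus T Rel lam2 v)
  <-> T (Rel v u) (T lam1 lam2) = 0.
Proof.
  intros H1 H2. destruct HRel as [Hunit [Hrefl Htrans]].
  unfold T_disjoint. setoid_rewrite granule_meet; auto. split.
  - intro Hdisj. specialize (Hdisj v). now rewrite Hrefl, tnorm_1x in Hdisj.
  - intros Hvu w. apply tnorm_eq0; auto. rewrite <- Hvu.
    apply tnorm_monol; auto.
Qed.

End Granules.

End TNorm.

Theorem proposition3 (U : Type) (T I : R -> R -> R) (N : R -> R)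
  (Rel : U -> U -> R) (u v : U) (lam1 lam2 : R) :
  finite_nonempty U ->
  residual_triplet T I N ->
  T_preorder T Rel ->
  unit_iv lam1 -> unit_iv lam2 ->
  (T_disjoint T (granule_plus T Rel lam1 u) (granule_minus T Rel lam2 v)
   <-> T lam1 lam2 <= N (Rel v u)).
Proof.
  intros _ [HT [Hlc [HI HN]]] HRel H1 H2.
  assert (Hvu : unit_iv (Rel v u)) by apply HRel.
  assert (Hlam : unit_iv (T lam1 lam2)) by now apply tnorm_unit.
  rewrite T_disjoint_granulesE, tnorm_eq0, HN by auto.
  now apply residuation.
Qed.
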